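(* Let $A$ be an integral domain such that $\operatorname{Sper}A=\emptyset$ (equivalently, there is no ring homomorphism from $A$ to a real closed field; equivalently, $-1$ is a sum of squares in $A$). Let $K$ be the fraction field of $A$, $\bar K$ an algebraic closure and $\bar A$ the integral closure of $A$ in $\bar K$. Then every $\theta\in\bar A$ is an eigenvalue of some symmetric matrix $M\in\operatorname{Sym}_r(A)$ for a suitable $r$.
   Context: $\operatorname{Sper}A$ is the real spectrum of $A$: the set of pairs $(\mathfrak p,P)$ with $\mathfrak p$ a prime ideal of $A$ and $P$ an ordering of the residue field $\kappa(\mathfrak p)$. $\operatorname{Sym}_r(A)$ is the set of symmetric $r\times r$ matrices over $A$; an eigenvalue of $M$ is a root of $\det(X\cdot \mathrm{I}_r-M)$ in $\bar K$. *)

From HB Require Import structures.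
From mathcomp Require Import all_boot all_order all_algebra.
Set Implicit Arguments. Unset Strict Implicit. Unset Printing Implicit Defensive.
Import Order.TTheory GRing.Theory Num.Theory.
Local Open Scope ring_scope.

(* Sper A = emptyset, in the equivalent form given in the statement:
   -1 is a sum of squares in A. *)
Definition neg1_sum_of_squares (A : idomainType) : Prop :=
  exists s : seq A, - 1 = \sum_(a <- s) a ^+ 2.

Definition to_frac (A : idomainType) : A -> {fraction A} := @FracField.tofrac A.

Definition symmetric_mx (A : idomainType) (r : nat) (M : 'M[A]_r) : Prop :=
  M^T = M.

Definition is_eigenvalue (A L : idomainType) (f : A -> L) (r : nat)
  (M : 'M[A]_r) (theta : L) : Prop :=
  root (map_poly f (char_poly M)) theta.

From HB Require Import structures.
From mathcomp Require Import all_boot all_order all_algebra ring.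
Set Implicit Arguments. Unset Strict Implicit. Unset Printing Implicit Defensive.
Import GRing.Theory.
Local Open Scope ring_scope.

(** An integral [theta] is an eigenvalue of the companion matrix [C] of a monic
    equation it satisfies, but [C] is not symmetric. Writing [-1 = \sum_k a_k^2],
    the symmetric block matrix
<<
        [    0      -a_1 C^T  ...  -a_m C^T ]
        [ -a_1 C    C + C^T   ...     0     ]
        [   ...                ...          ]
        [ -a_m C       0      ...  C + C^T  ]
>>
    has [(v, a_1 v, ..., a_m v)] as a left eigenvector for [theta] whenever
    [v C = theta v]: the first block column gives [-(\sum_k a_k^2) v C = v C] and
    the k-th one gives [a_k (v C + v C^T) - a_k v C^T = a_k v C]. *)

Lemma big_option (R : nmodType) (I : finType) (F : option I -> R) :
  \sum_(o : option I) F o = F None + \sum_(i : I) F (Some i).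
Proof.
rewrite (bigD1 None) //=; congr (_ + _).
rewrite (reindex_omap Some id) => [|[]//].
by apply: eq_bigl => i; rewrite eqxx.
Qed.

Lemma big_option_pair (R : nmodType) (I J : finType) (F : option I * J -> R) :
  \sum_(x : option I * J) F x =
  \sum_(j : J) F (None, j) + \sum_(i : I) \sum_(j : J) F (Some i, j).
Proof.
transitivity (\sum_(x : option I * J) F (x.1, x.2)); first by apply: eq_bigr => -[].
by rewrite -(pair_bigA _ (fun o j => F (o, j))) big_option.
Qed.

Lemma integral_eigenvalue_companion (A : comNzRingType) (K : fieldType)
    (f : {rmorphism A -> K}) (theta : K) :
  integralOver f theta -> exists n (C : 'M[A]_n), eigenvalue (map_mx f C) theta.
Proof.
case=> p p_monic p_theta; exists (size p).-1, (companionmx p).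
by rewrite eigenvalue_root_char -map_char_poly companionmxK.
Qed.

Section SymDilation.
Variables (R : comNzRingType) (m n : nat) (a : 'I_m -> R) (C : 'M[R]_n).

(* Block indices: [None] is the block of the original coordinates, [Some k] the
   block weighted by [a k]. *)
Definition sym_dilation_entry (x y : option 'I_m * 'I_n) : R :=
  match x, y with
  | (None, _), (None, _) => 0
  | (None, i), (Some l, j) => - a l * C j i
  | (Some k, i), (None, j) => - a k * C i j
  | (Some k, i), (Some l, j) => (k == l)%:R * (C i j + C j i)
  end.

Definition sym_dilation : 'M[R]_#|{: option 'I_m * 'I_n}| :=
  \matrix_(x, y) sym_dilation_entry (enum_val x) (enum_val y).

Definition dilation_vec (v : 'rV[R]_n) : 'rV[R]_#|{: option 'I_m * 'I_n}| :=
  \row_x let: (o, i) := enum_val x in oapp a 1 o * v 0 i.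

Lemma tr_sym_dilation : sym_dilation^T = sym_dilation.
Proof.
apply/matrixP => x y; rewrite !mxE.
case: (enum_val x) (enum_val y) => [[k|] i] [[l|] j] //=.
by rewrite eq_sym addrC.
Qed.

Lemma dilation_vecP (theta : R) (v : 'rV[R]_n) :
  \sum_k a k ^+ 2 = -1 -> v *m C = theta *: v ->
  dilation_vec v *m sym_dilation = theta *: dilation_vec v.
Proof.
move=> sum_sq vC; have vCj j : \sum_i v 0 i * C i j = theta * v 0 j.
  by have := congr1 (fun w : 'rV_n => w 0 j) vC; rewrite !mxE.
apply/rowP => y; rewrite !mxE.
under eq_bigr do rewrite !mxE.
rewrite -(big_enum_val (fun x => (let: (o, i) := x in oapp a 1 o * v 0 i)
  * sym_dilation_entry x (enum_val y))) /= big_option_pair.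
case: (enum_val y) => [[l|] j] /=.
- rewrite (bigD1 l) //= eqxx [X in _ + (_ + X)]big1 => [|k /negbTE ->]; last first.
    by apply: big1 => i _; rewrite mul0r mulr0.
  rewrite addr0 -big_split /=.
  rewrite (eq_bigr (fun i => a l * (v 0 i * C i j))) => [|i _]; last by ring.
  by rewrite -mulr_sumr vCj; ring.
- rewrite big1 => [|i _]; last by rewrite mulr0.
  rewrite (eq_bigr (fun k => - a k ^+ 2 * (theta * v 0 j))) => [|k _]; last first.
    by rewrite -vCj mulr_sumr; apply: eq_bigr => i _; ring.
  by rewrite -mulr_suml sumrN sum_sq; ring.
Qed.

Lemma dilation_vec_neq0 (v : 'rV[R]_n) : v != 0 -> dilation_vec v != 0.
Proof.
apply: contra => /eqP dv0; apply/eqP/rowP => i.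
move/rowP/(_ (enum_rank (None, i))): dv0.
by rewrite !mxE enum_rankK mul1r.
Qed.

End SymDilation.

Lemma map_sym_dilation (R S : comNzRingType) (f : {rmorphism R -> S}) m n
    (a : 'I_m -> R) (C : 'M[R]_n) :
  map_mx f (sym_dilation a C) = sym_dilation (f \o a) (map_mx f C).
Proof.
apply/matrixP => x y; rewrite !mxE.
case: (enum_val x) (enum_val y) => [[k|] i] [[l|] j] /=; rewrite ?mxE //;
  by rewrite ?(rmorph0, rmorphM, rmorphN, rmorphD, rmorph_nat).
Qed.

Lemma eigenvalue_sym_dilation (K : fieldType) m n (a : 'I_m -> K)
    (C : 'M[K]_n) (theta : K) :
  \sum_k a k ^+ 2 = -1 -> eigenvalue C theta ->
  eigenvalue (sym_dilation a C) theta.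
Proof.
move=> sum_sq /eigenvalueP[v vC v0]; apply/eigenvalueP.
by exists (dilation_vec a v); [exact: dilation_vecP | exact: dilation_vec_neq0].
Qed.

Theorem corollary4p4 (A : idomainType) (hA : neg1_sum_of_squares A)
  (Kbar : closedFieldType) (iota : {rmorphism {fraction A} -> Kbar})
  (hKbar : forall x : Kbar, algebraicOver iota x)
  (theta : Kbar) (htheta : integralOver (iota \o @to_frac A) theta) :
  exists (r : nat) (M : 'M[A]_r),
    symmetric_mx M /\ is_eigenvalue (iota \o @to_frac A) M theta.
Proof.
pose f : {rmorphism A -> Kbar} := iota \o @FracField.tofrac A.
case: hA => s sum_s; pose a (k : 'I_(size s)) := s`_k.
have sum_fa : \sum_k (f \o a) k ^+ 2 = -1.
  rewrite -(rmorphN1 f) sum_s rmorph_sum (big_nth 0) big_mkord.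
  by apply: eq_bigr => k _; rewrite rmorphXn.
have [n [C theta_C]] := integral_eigenvalue_companion htheta.
exists _, (sym_dilation a C); split; first exact: tr_sym_dilation.
rewrite /is_eigenvalue (map_char_poly f) -eigenvalue_root_char map_sym_dilation.
exact: eigenvalue_sym_dilation.
Qed.
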